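(* Let $K$ be a positive definite kernel on $\Omega\subset\mathbb{R}^d$, let $\lambda>0$, let $x_1,\dots,x_n\in\Omega$ be pairwise distinct, $X_k:=\{x_1,\dots,x_k\}$ for $0\le k\le n$, and let $f\in\mathcal{H}_\lambda$. With the functions $v_k^\lambda,v_k$ ($1\le k\le n$) defined in the context, it holds $$s_n^\lambda(f)=\sum_{k=1}^n (f,v_k^\lambda)_{\mathcal{H}_\lambda}\,v_k=s_{n-1}^\lambda(f)+(f,v_n^\lambda)_{\mathcal{H}_\lambda}\,v_n .$$ Moreover, if $f\in\mathcal{H}$, then $(f,v_k)_{\mathcal{H}}=(f,v_k^\lambda)_{\mathcal{H}_\lambda}$ for $1\le k\le n$, and therefore $$s_n^\lambda(f)=\sum_{k=1}^n (f,v_k)_{\mathcal{H}}\,v_k=s_{n-1}^\lambda(f)+(f,v_n)_{\mathcal{H}}\,v_n .$$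
   Context: A kernel $K:\Omega\times\Omega\to\mathbb{R}$ is positive definite if it is symmetric and all kernel matrices $(K(x_i,x_j))_{i,j}$ on pairwise distinct points are positive semidefinite (strictly positive definite: positive definite). $\mathcal{H}=\mathcal{H}_K(\Omega)$ is the native space (reproducing kernel Hilbert space) of $K$. Let $\delta(x,y)=1$ if $x=y$ and $0$ otherwise, $K_\lambda(x,y):=K(x,y)+\lambda\delta(x,y)$ (a strictly positive definite kernel for $\lambda>0$), and $\mathcal{H}_\lambda$ its native space. For pairwise distinct points $Y=\{y_1,\dots,y_m\}\subset\Omega$ with kernel matrix $A=(K(y_i,y_j))_{i,j}$ and a function $f:\Omega\to\mathbb{R}$, the regularized interpolant is $s^\lambda(f,Y):=\sum_{j=1}^m\alpha_jK(\cdot,y_j)$ with $(A+\lambda I)\alpha=(f(y_1),\dots,f(y_m))^T$; write $s_k^\lambda(f):=s^\lambda(f,X_k)$, with $s_0^\lambda(f):=0$. Let $A_n=(K(x_i,x_j))_{i,j=1}^n$, let $A_n+\lambda I=LL^T$ be the Cholesky factorization ($L$ lower triangular with positive diagonal), and $(\beta_{jk})_{j,k=1}^n:=L^{-T}$. Define $v_k^\lambda:=\sum_{j=1}^n\beta_{jk}K_\lambda(\cdot,x_j)$ (the Newton basis of $X_n$ in $\mathcal{H}_\lambda$) and $v_k:=\sum_{j=1}^n\beta_{jk}K(\cdot,x_j)$. *)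

From HB Require Import structures.
From mathcomp Require Import all_boot all_order all_algebra.
From mathcomp Require Import boolp classical_sets reals.
Set Implicit Arguments. Unset Strict Implicit. Unset Printing Implicit Defensive.
Import Order.TTheory GRing.Theory Num.Theory.
Local Open Scope ring_scope.

Section Defs.
Variable R : realType.

Definition Dom (d : nat) (Om : set 'rV[R]_d) := {x : 'rV[R]_d | Om x}.

Variable T : Type.

Definition kmat (K : T -> T -> R) (m : nat) (y : 'I_m -> T) : 'M[R]_m :=
  \matrix_(i < m, j < m) K (y i) (y j).

Definition psd_mx (m : nat) (A : 'M[R]_m) : Prop :=
  forall c : 'cV[R]_m, 0 <= (c^T *m A *m c) 0 0.

Definition pd_kernel (K : T -> T -> R) : Prop :=
  (forall x y, K x y = K y x) /\
  (forall (m : nat) (y : 'I_m -> T), injective y -> psd_mx (kmat K y)).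

Definition delta (x y : T) : R := if asbool (x = y) then 1 else 0.
Definition Klam (K : T -> T -> R) (lam : R) : T -> T -> R :=
  fun x y => K x y + lam * delta x y.

(* Such a space is unique (= H_K). *)
Record native_space (K : T -> T -> R) (H : set (T -> R))
    (ip : (T -> R) -> (T -> R) -> R) : Prop := {
  ns_0 : H (fun _ => 0);
  ns_add : forall f g, H f -> H g -> H (fun z => f z + g z);
  ns_scale : forall (a : R) f, H f -> H (fun z => a * f z);
  ns_sym : forall f g, H f -> H g -> ip f g = ip g f;
  ns_linl : forall (a b : R) f g h, H f -> H g -> H h ->
     ip (fun z => a * f z + b * g z) h = a * ip f h + b * ip g h;
  ns_pos : forall f, H f -> 0 <= ip f f;
  ns_def : forall f, H f -> ip f f = 0 -> f = (fun _ => 0);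
  ns_complete : forall u : nat -> (T -> R), (forall k, H (u k)) ->
     (forall e : R, 0 < e -> exists N, forall p q, (N <= p)%N -> (N <= q)%N ->
        ip (fun z => u p z - u q z) (fun z => u p z - u q z) < e) ->
     exists2 g, H g & (forall e : R, 0 < e -> exists N, forall p, (N <= p)%N ->
        ip (fun z => u p z - g z) (fun z => u p z - g z) < e);
  ns_kernel : forall x, H (fun z => K z x);
  ns_repr : forall f x, H f -> ip f (fun z => K z x) = f x
}.

Definition reg_interp (K : T -> T -> R) (lam : R) (f : T -> R)
    (m : nat) (y : 'I_m -> T) : T -> R :=
  let alpha := invmx (kmat K y + lam%:M) *m (\col_(i < m) f (y i)) in
  fun z => \sum_(j < m) alpha j ord0 * K z (y j).

(* s_k^lam(f) = s^lam(f, X_k) with X_k = {x_0, ..., x_(k-1)} (0-based);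
   s_0^lam(f) = 0 (empty sum). *)
Definition s_k (K : T -> T -> R) (lam : R) (f : T -> R) (x : nat -> T)
    (k : nat) : T -> R :=
  reg_interp K lam f (fun i : 'I_k => x (nat_of_ord i)).

(* Newton-type functions built from beta = L^{-T}:
   sum_j beta_jk G(., x_j) with G = K (v_k) or G = K_lam (v_k^lam) *)
Definition newton_fun (G : T -> T -> R) (N : nat) (x : nat -> T)
    (beta : 'M[R]_N) (k : 'I_N) : T -> R :=
  fun z => \sum_(j < N) beta j k * G z (x (nat_of_ord j)).

End Defs.

From HB Require Import structures.
From mathcomp Require Import all_boot all_order all_algebra.
From mathcomp Require Import boolp classical_sets reals.
Import Order.TTheory GRing.Theory Num.Theory.
Local Open Scope ring_scope.

(* With c := L^-1 f|X, the interpolation coefficients are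
   (A + lam I)^-1 f|X = L^-T c, so s^lam(f, X) = sum_k c_k v_k; by the
   reproducing property of K_lam (resp. K), c_k is the inner product of f with
   v^lam_k (resp. v_k).  As L is lower triangular, its leading (n-1)x(n-1)
   block is the Cholesky factor for X_(n-1), the inverse of that block is the
   leading block of L^-1, and the last column of L^-1 vanishes off the
   diagonal; so s^lam(f, X_(n-1)) is the same expansion without its last term. *)

Section NativeSpace.
Context {R : realType} {T : Type} {G : T -> T -> R}.
Context {H : set (T -> R)} {ip : (T -> R) -> (T -> R) -> R}.
Hypothesis hH : native_space G H ip.

Lemma native_ip_linr (a b : R) f g h : H f -> H g -> H h ->
  ip h (fun z => a * f z + b * g z) = a * ip h f + b * ip h g.
Proof.
move=> Hf Hg Hh; rewrite (ns_sym hH) ?(ns_linl hH) ?(ns_sym hH Hh) //.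
by apply: (ns_add hH); apply: (ns_scale hH).
Qed.

Lemma native_sum_mem (I : Type) (r : seq I) (a : I -> R) (g : I -> T -> R) :
  (forall i, H (g i)) -> H (fun z => \sum_(i <- r) a i * g i z).
Proof.
move=> Hg; elim: r => [|i r IHr].
  by under eq_fun do rewrite big_nil; exact: (ns_0 hH).
under eq_fun do rewrite big_cons.
exact: (ns_add hH (ns_scale hH _ (Hg i)) IHr).
Qed.

Lemma native_ip_sumr (I : Type) (r : seq I) (a : I -> R) (g : I -> T -> R) f :
  H f -> (forall i, H (g i)) ->
  ip f (fun z => \sum_(i <- r) a i * g i z) = \sum_(i <- r) a i * ip f (g i).
Proof.
move=> Hf Hg; elim: r => [|i r IHr].
  have -> : (fun z => \sum_(i <- [::]) a i * g i z) = fun z => 0 * f z + 0 * f z.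
    by apply: funext => z; rewrite big_nil !mul0r addr0.
  by rewrite native_ip_linr // big_nil !mul0r addr0.
rewrite big_cons -IHr -[X in _ = _ + X]mul1r -native_ip_linr //;
  last exact: native_sum_mem.
by congr ip; apply: funext => z; rewrite big_cons mul1r.
Qed.

Lemma native_ip_kernel_sum (I : Type) (r : seq I) (b : I -> R) (y : I -> T) f :
  H f -> ip f (fun z => \sum_(i <- r) b i * G z (y i)) = \sum_(i <- r) b i * f (y i).
Proof.
move=> Hf; rewrite (@native_ip_sumr _ r b (fun i z => G z (y i))) //; last first.
  by move=> i; exact: (ns_kernel hH).
by apply: eq_bigr => i _; rewrite (ns_repr hH).
Qed.

Lemma ip_newton_fun {N} {x : nat -> T} {beta : 'M[R]_N} {k : 'I_N} {f} : H f ->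
  ip f (newton_fun G x beta k) = (beta^T *m \col_(i < N) f (x i)) k 0.
Proof.
move=> Hf; rewrite /newton_fun native_ip_kernel_sum // mxE.
by apply: eq_bigr => j _; rewrite !mxE.
Qed.

End NativeSpace.

Lemma trig_unitmx {R : fieldType} {n} {A : 'M[R]_n} :
  is_trig_mx A -> (forall i, A i i != 0) -> A \in unitmx.
Proof.
move=> Atrig Adiag; rewrite unitmxE det_trig // unitfE.
by apply/prodf_neq0 => i _; exact: Adiag.
Qed.

Lemma invmxM {R : comUnitRingType} {n} (A B : 'M[R]_n) :
  A \in unitmx -> B \in unitmx -> invmx (A *m B) = invmx B *m invmx A.
Proof.
move=> Au Bu; have ABu : A *m B \in unitmx by rewrite unitmx_mul Au Bu.
have AB1 : A *m B *m (invmx B *m invmx A) = 1%:M by rewrite mulmxA mulmxK // mulmxV.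
by rewrite -[RHS](mulKmx ABu) AB1 mulmx1.
Qed.

Section LeadingBlock.
Context {R : fieldType} {m : nat}.
Local Notation w := (widen_ord (leqnSn m)).
Local Notation lead A := (mxsub w w A).

Lemma mulmx_col_max0 p q (A : 'M[R]_(p, m.+1)) (B : 'M_(m.+1, q)) :
  (forall i, A i ord_max = 0) -> A *m B = colsub w A *m rowsub w B.
Proof.
move=> A0; apply/matrixP => i j; rewrite !mxE big_ord_recr /= A0 mul0r addr0.
by apply: eq_bigr => k _; rewrite !mxE.
Qed.

Lemma rowsub_mul_col_max0 q (A : 'M[R]_m.+1) (B : 'M_(m.+1, q)) :
  (forall i : 'I_m, A (w i) ord_max = 0) -> rowsub w (A *m B) = lead A *m rowsub w B.
Proof.
move=> A0; rewrite -mul_rowsub_mx (@mulmx_col_max0 _ _ (rowsub w A)) -?mxsubcr //.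
by move=> i; rewrite mxE.
Qed.

Lemma lead_mul_col_max0 (A B : 'M[R]_m.+1) :
  (forall i : 'I_m, A (w i) ord_max = 0) -> lead (A *m B) = lead A *m lead B.
Proof.
by move=> A0; rewrite mxsubcr rowsub_mul_col_max0 // -mulmx_colsub -mxsubcr.
Qed.

Lemma lead_scalar (a : R) : lead (a%:M : 'M_m.+1) = a%:M.
Proof. by apply/matrixP => i j; rewrite !mxE. Qed.

Context {L : 'M[R]_m.+1}.
Hypotheses (Ltrig : is_trig_mx L) (Ldiag : forall i, L i i != 0).

Lemma trig_col_max0 (i : 'I_m) : L (w i) ord_max = 0.
Proof. by move/is_trig_mxP: Ltrig; apply; rewrite /= ltn_ord. Qed.

Lemma invmx_trig_col_max0 (i : 'I_m) : invmx L (w i) ord_max = 0.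
Proof.
have /matrixP/(_ (w i) ord_max) := mulVmx (trig_unitmx Ltrig Ldiag).
rewrite /= !mxE big_ord_recr /= big1 => [|k _]; last by rewrite trig_col_max0 mulr0.
rewrite add0r -val_eqE /= ltn_eqF // => /eqP.
by rewrite mulf_eq0 (negbTE (Ldiag _)) orbF => /eqP.
Qed.

Lemma lead_mul_invmx : lead L *m lead (invmx L) = 1%:M.
Proof.
rewrite -lead_mul_col_max0 ?mulmxV ?lead_scalar //; last exact: trig_col_max0.
exact: trig_unitmx.
Qed.

Lemma lead_unitmx : lead L \in unitmx.
Proof. by have [] := mulmx1_unit lead_mul_invmx. Qed.

Lemma invmx_lead : invmx (lead L) = lead (invmx L).
Proof. by rewrite -[RHS](mulKmx lead_unitmx) lead_mul_invmx mulmx1. Qed.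

End LeadingBlock.

Section Interpolation.
Context {R : realType} {T : Type} {K : T -> T -> R} {lam : R}.
Context {f : T -> R} {x : nat -> T}.

Lemma newton_fun_comb N (beta : 'M[R]_N) (c : 'cV_N) :
  (fun z => \sum_k c k 0 * newton_fun K x beta k z) =
  (fun z => \sum_j (beta *m c) j 0 * K z (x j)).
Proof.
apply: funext => z; rewrite /newton_fun; under eq_bigr do rewrite mulr_sumr.
rewrite exchange_big; apply: eq_bigr => j _; rewrite mxE mulr_suml.
by apply: eq_bigr => k _; rewrite mulrA [c k 0 * _]mulrC.
Qed.

Lemma s_k_cholesky {N} {L : 'M[R]_N} : L \in unitmx ->
  kmat K (fun i : 'I_N => x i) + lam%:M = L *m L^T ->
  s_k K lam f x N =
  (fun z => \sum_k ((invmx L^T)^T *m \col_(i < N) f (x i)) k 0 *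
              newton_fun K x (invmx L^T) k z).
Proof.
move=> Lu chol; rewrite newton_fun_comb /s_k /reg_interp chol.
by rewrite invmxM ?unitmx_tr // trmx_inv trmxK mulmxA.
Qed.

Lemma s_k_cholesky_lead {n} {L : 'M[R]_n.+1} :
  is_trig_mx L -> (forall i, L i i != 0) ->
  kmat K (fun i : 'I_n.+1 => x i) + lam%:M = L *m L^T ->
  s_k K lam f x n =
  (fun z => \sum_(k < n)
     ((invmx L^T)^T *m \col_(i < n.+1) f (x i)) (widen_ord (leqnSn n) k) 0 *
     newton_fun K x (invmx L^T) (widen_ord (leqnSn n) k) z).
Proof.
move=> Ltrig Ldiag chol; set w := widen_ord (leqnSn n).
have lead_chol : kmat K (fun i : 'I_n => x i) + lam%:M =
                 mxsub w w L *m (mxsub w w L)^T.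
  rewrite trmx_mxsub -lead_mul_col_max0; last exact: trig_col_max0.
  by rewrite -chol; apply/matrixP => i j; rewrite !mxE.
rewrite (s_k_cholesky (lead_unitmx Ltrig Ldiag) lead_chol).
apply: funext => z; apply: eq_bigr => k _; congr (_ * _).
  have -> : \col_(i < n) f (x i) = rowsub w (\col_(i < n.+1) f (x i)).
    by apply/matrixP => i j; rewrite !mxE.
  rewrite !trmx_inv !trmxK invmx_lead // -rowsub_mul_col_max0 ?mxE //.
  exact: invmx_trig_col_max0.
rewrite /newton_fun big_ord_recr /= -!trmx_inv [(invmx L)^T _ _]mxE.
rewrite invmx_trig_col_max0 // mul0r addr0 invmx_lead //.
by apply: eq_bigr => j _; rewrite !mxE.
Qed.

End Interpolation.

(* The number of points is n.+1 (>= 1), points x_0, ..., x_n (0-based). *)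
Theorem proposition2p2 (R : realType) (d : nat) (Om : set 'rV[R]_d)
    (K : Dom Om -> Dom Om -> R) (hK : pd_kernel K)
    (lam : R) (hlam : 0 < lam)
    (n : nat) (x : nat -> Dom Om)
    (hx : forall i j : nat, (i < n.+1)%N -> (j < n.+1)%N -> x i = x j -> i = j)
    (H : set (Dom Om -> R)) (ip : (Dom Om -> R) -> (Dom Om -> R) -> R)
    (hH : native_space K H ip)
    (Hl : set (Dom Om -> R)) (ipl : (Dom Om -> R) -> (Dom Om -> R) -> R)
    (hHl : native_space (Klam K lam) Hl ipl)
    (L : 'M[R]_n.+1)
    (hLlow : forall i j : 'I_n.+1, (i < j)%N -> L i j = 0)
    (hLdiag : forall i : 'I_n.+1, 0 < L i i)
    (hLchol : kmat K (fun i : 'I_n.+1 => x (nat_of_ord i)) + lam%:M = L *m L^T)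
    (f : Dom Om -> R) (hf : Hl f) :
  let beta := invmx (L^T) in
  let v := newton_fun K x beta in
  let vl := newton_fun (Klam K lam) x beta in
  (s_k K lam f x n.+1 = (fun z => \sum_(k < n.+1) ipl f (vl k) * v k z) /\
   s_k K lam f x n.+1 =
     (fun z => s_k K lam f x n z + ipl f (vl ord_max) * v ord_max z)) /\
  (H f ->
   (forall k : 'I_n.+1, ip f (v k) = ipl f (vl k)) /\
   s_k K lam f x n.+1 = (fun z => \sum_(k < n.+1) ip f (v k) * v k z) /\
   s_k K lam f x n.+1 =
     (fun z => s_k K lam f x n z + ip f (v ord_max) * v ord_max z)).
Proof.
move=> beta v vl.
have Ltrig : is_trig_mx L by apply/is_trig_mxP.
have Ldiag i : L i i != 0 by rewrite lt0r_neq0.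
set c := beta^T *m \col_(i < n.+1) f (x i).
have ipl_vl k : ipl f (vl k) = c k 0 by rewrite /vl (ip_newton_fun hHl hf).
have s_full : s_k K lam f x n.+1 = (fun z => \sum_k c k 0 * v k z).
  exact: s_k_cholesky (trig_unitmx Ltrig Ldiag) hLchol.
have s_rec : s_k K lam f x n.+1 =
             (fun z => s_k K lam f x n z + c ord_max 0 * v ord_max z).
  by rewrite s_full (s_k_cholesky_lead Ltrig Ldiag hLchol); apply: funext => z;
     rewrite big_ord_recr.
split.
  split; last by rewrite s_rec ipl_vl.
  by rewrite s_full; apply: funext => z; apply: eq_bigr => k _; rewrite ipl_vl.
move=> Hf; have ip_v k : ip f (v k) = ipl f (vl k).
  by rewrite ipl_vl /v (ip_newton_fun hH Hf).
split=> //; split; last by rewrite s_rec ip_v ipl_vl.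
by rewrite s_full; apply: funext => z; apply: eq_bigr => k _; rewrite ip_v ipl_vl.
Qed.
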